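(* Let $\varphi$ be an IPDL-formula all of whose propositional variables are among $p_1,\ldots,p_n$ and all of whose atomic program terms are among $a_1,\ldots,a_l$ ($l\ge1$), and let $\varphi^*$ be the variable-free formula constructed from $\varphi$ as in the context. Then $\varphi$ is satisfiable if, and only if, $\varphi^*$ is satisfiable.
   Context: Fix a countable set $\mathit{Var}=\{p_1,p_2,\ldots\}$ of propositional variables and a countable set $AP=\{a_1,a_2,\ldots\}$ of atomic program terms. IPDL formulas and program terms are defined simultaneously by $\varphi ::= p \mid \bot \mid (\varphi\rightarrow\varphi)\mid [\alpha]\varphi$ and $\alpha ::= a \mid \varphi? \mid (\alpha;\alpha)\mid(\alpha\cup\alpha)\mid(\alpha\cap\alpha)\mid \alpha^*$ ($p\in\mathit{Var}$, $a\in AP$); $\neg,\wedge,\top$ etc. are defined as usual and $\langle\alpha\rangle\psi=\neg[\alpha]\neg\psi$. A Kripke model is $\mathfrak{M}=(S,\{R_a\}_{a\in AP},V)$, $S\neq\varnothing$, $R_a\subseteq S\times S$, $V:\mathit{Var}\to2^S$; $(s,t)\in R_{\psi?}$ iff $s=t$ and $\mathfrak{M},s\models\psi$; $R_{\alpha;\beta}$ is relational composition; $R_{\alpha\cup\beta}=R_\alpha\cup R_\beta$; $R_{\alpha\cap\beta}=R_\alpha\cap R_\beta$; $R_{\alpha^*}$ is the reflexive transitive closure of $R_\alpha$; $\mathfrak{M},s\models p$ iff $s\in V(p)$; $\bot$ is never true; $\rightarrow$ is classical; $\mathfrak{M},s\models[\alpha]\psi$ iff $\psi$ holds at all $R_\alpha$-successors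 of $s$. A formula is satisfiable if true at some state of some model. Construction: let $\gamma=a_1\cup\cdots\cup a_l$. The translation $\cdot'$: $a_j'=a_j$; $(\alpha;\beta)'=\alpha';\beta'$; $(\alpha\cup\beta)'=\alpha'\cup\beta'$; $(\alpha\cap\beta)'=\alpha'\cap\beta'$; $(\alpha^* )'=(\alpha')^*$; $(\psi?)'=(\psi')?$; $p_i'=p_i$ ($i\le n$); $\bot'=\bot$; $(\psi\rightarrow\chi)'=\psi'\rightarrow\chi'$; $([\alpha]\psi)'=[\alpha'](p_{n+1}\rightarrow\psi')$. Let $\Theta=p_{n+1}\wedge[\gamma^*](\langle\gamma\rangle p_{n+1}\rightarrow p_{n+1})$ and $\widehat{\varphi}=\Theta\wedge\varphi'$. Let $b$ be the lexicographically first atomic program term occurring in $\varphi$ if there is one, and $b=a_1$ otherwise. Define $\langle b\rangle^0\psi=\psi$, $\langle b\rangle^{j+1}\psi=\langle b\rangle\langle b\rangle^j\psi$, and for $m\in\{1,\ldots,n+1\}$: $A_m=\langle b\rangle^m[b]\bot\wedge\neg\langle b\rangle^{m+1}[b]\bot\wedge\langle b\rangle(\langle b\rangle\top\wedge[b]\langle b\rangle\top)$ and $B_m=\langle b\rangle A_m$. Let $\sigma$ be the substitution replacing every occurrence of $p_i$ by $B_i$ for $1\le i\le n+1$, and $\varphi^*=\sigma(\widehat{\varphi})$. *)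

From Stdlib Require Import List Arith Relations Bool.
Import ListNotations.

(* Var i stands for p_i and Atom j for a_j (the paper's indices start at 1;
   index 0 is never used in the hypotheses of the main theorem). *)
Inductive form : Type :=
| Var : nat -> form
| Bot : form
| Imp : form -> form -> form
| Box : prog -> form -> form
with prog : Type :=
| Atom : nat -> prog
| Test : form -> prog
| Seq : prog -> prog -> prog
| Union : prog -> prog -> prog
| Cap : prog -> prog -> prog
| Star : prog -> prog.

Definition Neg (f : form) : form := Imp f Bot.
Definition Top : form := Neg Bot.
Definition And (f g : form) : form := Neg (Imp f (Neg g)).
Definition Dia (a : prog) (f : form) : form := Neg (Box a (Neg f)).

Record model : Type := Model {
  St : Type;
  Rel : nat -> St -> St -> Prop;
  Val : nat -> St -> Prop
}.

Fixpoint sat (M : model) (s : St M) (f : form) {struct f} : Prop :=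
  match f with
  | Var i => Val M i s
  | Bot => False
  | Imp f1 f2 => sat M s f1 -> sat M s f2
  | Box a g => forall t, rel M a s t -> sat M t g
  end
with rel (M : model) (a : prog) {struct a} : St M -> St M -> Prop :=
  match a with
  | Atom j => Rel M j
  | Test f => fun s t => s = t /\ sat M s f
  | Seq a1 a2 => fun s u => exists t, rel M a1 s t /\ rel M a2 t u
  | Union a1 a2 => fun s t => rel M a1 s t \/ rel M a2 s t
  | Cap a1 a2 => fun s t => rel M a1 s t /\ rel M a2 s t
  | Star a1 => clos_refl_trans (St M) (rel M a1)
  end.

Definition satisfiable (f : form) : Prop :=
  exists (M : model) (s : St M), sat M s f.

Fixpoint vars_f (f : form) : list nat :=
  match f with
  | Var i => [i]
  | Bot => []
  | Imp f1 f2 => vars_f f1 ++ vars_f f2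
  | Box a g => vars_p a ++ vars_f g
  end
with vars_p (a : prog) : list nat :=
  match a with
  | Atom _ => []
  | Test f => vars_f f
  | Seq a1 a2 | Union a1 a2 | Cap a1 a2 => vars_p a1 ++ vars_p a2
  | Star a1 => vars_p a1
  end.

Fixpoint atoms_f (f : form) : list nat :=
  match f with
  | Var _ => []
  | Bot => []
  | Imp f1 f2 => atoms_f f1 ++ atoms_f f2
  | Box a g => atoms_p a ++ atoms_f g
  end
with atoms_p (a : prog) : list nat :=
  match a with
  | Atom j => [j]
  | Test f => atoms_f f
  | Seq a1 a2 | Union a1 a2 | Cap a1 a2 => atoms_p a1 ++ atoms_p a2
  | Star a1 => atoms_p a1
  end.

Fixpoint gamma_aux (l : nat) : prog :=
  match l with
  | 0 => Atom 1
  | S 0 => Atom 1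
  | S k => Union (gamma_aux k) (Atom (S k))
  end.
Definition gamma (l : nat) : prog := gamma_aux l.

Fixpoint tr_f (n : nat) (f : form) : form :=
  match f with
  | Var i => Var i
  | Bot => Bot
  | Imp f1 f2 => Imp (tr_f n f1) (tr_f n f2)
  | Box a g => Box (tr_p n a) (Imp (Var (S n)) (tr_f n g))
  end
with tr_p (n : nat) (a : prog) : prog :=
  match a with
  | Atom j => Atom j
  | Test f => Test (tr_f n f)
  | Seq a1 a2 => Seq (tr_p n a1) (tr_p n a2)
  | Union a1 a2 => Union (tr_p n a1) (tr_p n a2)
  | Cap a1 a2 => Cap (tr_p n a1) (tr_p n a2)
  | Star a1 => Star (tr_p n a1)
  end.

Definition Theta (n l : nat) : form :=
  And (Var (S n))
      (Box (Star (gamma l)) (Imp (Dia (gamma l) (Var (S n))) (Var (S n)))).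

Definition hat (n l : nat) (f : form) : form := And (Theta n l) (tr_f n f).

Definition first_atom (f : form) : nat :=
  match atoms_f f with
  | [] => 1
  | x :: xs => fold_left Nat.min xs x
  end.

Fixpoint dia_iter (b : nat) (k : nat) (f : form) : form :=
  match k with
  | 0 => f
  | S k' => Dia (Atom b) (dia_iter b k' f)
  end.

Definition A_form (b m : nat) : form :=
  And (dia_iter b m (Box (Atom b) Bot))
      (And (Neg (dia_iter b (S m) (Box (Atom b) Bot)))
           (Dia (Atom b) (And (Dia (Atom b) Top) (Box (Atom b) (Dia (Atom b) Top))))).

Definition B_form (b m : nat) : form := Dia (Atom b) (A_form b m).

Fixpoint subst_f (s : nat -> form) (f : form) : form :=
  match f with
  | Var i => s i
  | Bot => Bot
  | Imp f1 f2 => Imp (subst_f s f1) (subst_f s f2)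
  | Box a g => Box (subst_p s a) (subst_f s g)
  end
with subst_p (s : nat -> form) (a : prog) : prog :=
  match a with
  | Atom j => Atom j
  | Test f => Test (subst_f s f)
  | Seq a1 a2 => Seq (subst_p s a1) (subst_p s a2)
  | Union a1 a2 => Union (subst_p s a1) (subst_p s a2)
  | Cap a1 a2 => Cap (subst_p s a1) (subst_p s a2)
  | Star a1 => Star (subst_p s a1)
  end.

Definition sigma (n : nat) (b : nat) : nat -> form :=
  fun i => if andb (1 <=? i) (i <=? S n) then B_form b i else Var i.

Definition star_form (n l : nat) (f : form) : form :=
  subst_f (sigma n (first_atom f)) (hat n l f).

(* Forward direction: hang below every state of a model of phi a b-gadget whose
   shape encodes the valuation, so that B_i holds at an original state exactly when
   p_i does (i <= n), B_(n+1) holds at every original state, and no B_i holds at a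
   gadget state.  Substituting B_i for p_i then recovers the original valuation,
   p_(n+1) marks the original part, and the translated modalities, relativized to
   p_(n+1), never see the gadgets; since gadgets only reach gadgets, Theta holds.
   Converse: a model of phi^* is a model of hat(phi) with p_i read as B_i.
   Restricting every atomic relation to the states that are gamma*-reachable from
   the root and satisfy p_(n+1) gives a model of phi, because Theta makes p_(n+1)
   closed under gamma-predecessors inside the reachable part, so every
   translated program step between such states stays among them. *)

From Stdlib Require Import List Arith Relations Lia Classical.

Scheme form_ind2 := Induction for form Sort Prop
with prog_ind2 := Induction for prog Sort Prop.
Combined Scheme form_prog_ind from form_ind2, prog_ind2.

Lemma sat_Neg M x f : sat M x (Neg f) <-> ~ sat M x f.
Proof. reflexivity. Qed.

Lemma sat_And M x f g : sat M x (And f g) <-> sat M x f /\ sat M x g.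
Proof. simpl; split; [intros H; apply NNPP; tauto | tauto]. Qed.

Lemma sat_Dia M x a f : sat M x (Dia a f) <-> exists y, rel M a x y /\ sat M y f.
Proof.
  simpl; split.
  - intros H; apply NNPP; intros Hno; apply H; intros t r s; apply Hno; eauto.
  - intros [y [r s]] H; exact (H y r s).
Qed.

Lemma clos_refl_trans_mono (A : Type) (R1 R2 : relation A) :
  inclusion A R1 R2 -> inclusion A (clos_refl_trans A R1) (clos_refl_trans A R2).
Proof.
  intros H x y C; induction C; [apply rt_step, H | apply rt_refl | eapply rt_trans]; eauto.
Qed.

Definition subst_model (M : model) (s : nat -> form) : model :=
  Model (St M) (Rel M) (fun i x => sat M x (s i)).

Lemma sat_subst M s :
  (forall f x, sat M x (subst_f s f) <-> sat (subst_model M s) x f) /\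
  (forall a x y, rel M (subst_p s a) x y <-> rel (subst_model M s) a x y).
Proof.
  apply form_prog_ind; simpl.
  1, 2, 5: intros; reflexivity.
  - intros f1 IH1 f2 IH2 x; rewrite IH1, IH2; reflexivity.
  - intros a IHa g IHg x; split; intros Hbox t r; apply IHg, Hbox, IHa, r.
  - intros f IHf x y; rewrite IHf; reflexivity.
  - intros a1 IH1 a2 IH2 x y.
    split; intros [t [r1 r2]]; exists t; rewrite IH1, IH2 in *; auto.
  - intros a1 IH1 a2 IH2 x y; rewrite IH1, IH2; reflexivity.
  - intros a1 IH1 a2 IH2 x y; rewrite IH1, IH2; reflexivity.
  - intros a IH x y; split; apply clos_refl_trans_mono; intros u v; apply IH.
Qed.

Lemma rel_gamma_Atom N l j x y : 1 <= j <= l -> Rel N j x y -> rel N (gamma l) x y.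
Proof.
  unfold gamma; induction l as [|[|k] IH]; intros Hj r; [lia | |].
  - assert (j = 1) as -> by lia; exact r.
  - destruct (Nat.eq_dec j (S (S k))) as [->|ne_j]; [right; exact r|].
    left; apply IH; [lia | exact r].
Qed.

Lemma rel_tr_gamma_star N n l a :
  Forall (fun j => 1 <= j <= l) (atoms_p a) ->
  forall x y, rel N (tr_p n a) x y -> clos_refl_trans _ (rel N (gamma l)) x y.
Proof.
  induction a as [j|f|a1 IH1 a2 IH2|a1 IH1 a2 IH2|a1 IH1 a2 IH2|a1 IH1];
    simpl; intros Ha x y r; try apply Forall_app in Ha as [Ha1 Ha2].
  - apply rt_step; apply rel_gamma_Atom with j; [exact (Forall_inv Ha) | exact r].
  - destruct r as [-> _]; apply rt_refl.
  - destruct r as [t [r1 r2]]; eapply rt_trans; eauto.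
  - destruct r; eauto.
  - apply IH1, r; exact Ha1.
  - apply clos_rt_idempotent; revert r; apply clos_refl_trans_mono; intros u v; apply IH1, Ha.
Qed.

Section Relativization.

Variables (N : model) (root : St N) (n l : nat).

Definition reachable (x : St N) : Prop := clos_refl_trans _ (rel N (gamma l)) root x.

Hypothesis guard_backward : forall t v,
  reachable t -> rel N (gamma l) t v -> Val N (S n) v -> Val N (S n) t.

Lemma guard_backward_star x u :
  reachable x -> clos_refl_trans _ (rel N (gamma l)) x u -> Val N (S n) u -> Val N (S n) x.
Proof.
  intros Rx C; revert Rx; induction C as [x u r | x | x y u C1 IH1 C2 IH2]; intros Rx Vu.
  - eapply guard_backward; eauto.
  - exact Vu.
  - apply IH1, IH2; auto; eapply rt_trans; eauto.
Qed.

Definition good (x : St N) : Prop := reachable x /\ Val N (S n) x.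

Lemma good_between x y u :
  good x -> clos_refl_trans _ (rel N (gamma l)) x y ->
  clos_refl_trans _ (rel N (gamma l)) y u -> good u -> good y.
Proof.
  intros [Rx _] C1 C2 [_ Vu].
  assert (Ry : reachable y) by (eapply rt_trans; eauto).
  split; [exact Ry | eapply guard_backward_star; eauto].
Qed.

Definition relativize : model :=
  Model (St N) (fun j x y => Rel N j x y /\ good x /\ good y) (Val N).

Lemma sat_relativize :
  (forall f, Forall (fun j => 1 <= j <= l) (atoms_f f) ->
     forall x, good x -> (sat relativize x f <-> sat N x (tr_f n f))) /\
  (forall a, Forall (fun j => 1 <= j <= l) (atoms_p a) ->
     forall x u, good x -> (rel relativize a x u <-> rel N (tr_p n a) x u /\ good u)).
Proof.
  apply form_prog_ind; simpl.
  1, 2: intros; reflexivity.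
  - intros f1 IH1 f2 IH2 [A1 A2]%Forall_app x gx.
    rewrite IH1, IH2 by assumption; reflexivity.
  - intros a IHa g IHg [Aa Ag]%Forall_app x gx; split.
    + intros Hbox u r Vu.
      assert (gu : good u).
      { split; [eapply rt_trans; [apply gx | exact (rel_tr_gamma_star N n l a Aa x u r)] | exact Vu]. }
      apply IHg, Hbox, IHa; auto.
    + intros Hbox u r; apply IHa in r as [r gu]; auto.
      apply IHg, Hbox; auto; apply gu.
  - intros j _ x u gx; tauto.
  - intros f IHf Af x u gx; rewrite (IHf Af x gx).
    split; [intros [<- Hf] | intros [[<- Hf] _]]; auto.
  - intros a1 IH1 a2 IH2 [A1 A2]%Forall_app x u gx; split.
    + intros [t [r1 r2]].
      apply IH1 in r1 as [r1 gt]; auto; apply IH2 in r2 as [r2 gu]; eauto.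
    + intros [[t [r1 r2]] gu].
      assert (gt : good t).
      { eapply good_between; [exact gx | | | exact gu].
        - exact (rel_tr_gamma_star N n l a1 A1 x t r1).
        - exact (rel_tr_gamma_star N n l a2 A2 t u r2). }
      exists t; split; [apply IH1 | apply IH2]; auto.
  - intros a1 IH1 a2 IH2 [A1 A2]%Forall_app x u gx.
    rewrite (IH1 A1 x u gx), (IH2 A2 x u gx); tauto.
  - intros a1 IH1 a2 IH2 [A1 A2]%Forall_app x u gx.
    rewrite (IH1 A1 x u gx), (IH2 A2 x u gx); tauto.
  - intros a IH A x u gx.
    assert (reach_star := rel_tr_gamma_star N n l (Star a) A).
    split.
    + intros C; revert gx; induction C as [x u r | x | x y u C1 IH1 C2 IH2]; intros gx.
      * apply IH in r as [r gu]; auto; split; [apply rt_step, r | exact gu].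
      * split; [apply rt_refl | exact gx].
      * destruct (IH1 gx) as [r1 gy], (IH2 gy) as [r2 gu].
        split; [eapply rt_trans; eauto | exact gu].
    + intros [C gu]; revert gx gu.
      induction C as [x u r | x | x y u C1 IH1 C2 IH2]; intros gx gu.
      * apply rt_step, IH; auto.
      * apply rt_refl.
      * assert (gy : good y).
        { eapply good_between; [exact gx | apply reach_star, C1 | apply reach_star, C2 | exact gu]. }
        eapply rt_trans; eauto.
Qed.

End Relativization.

Lemma satisfiable_of_sat_hat N s n l f :
  Forall (fun j => 1 <= j <= l) (atoms_f f) -> sat N s (hat n l f) -> satisfiable f.
Proof.
  unfold hat, Theta; rewrite !sat_And; intros Ha [[Vs Hinv] Hf].
  assert (guard : forall t v, reachable N s l t -> rel N (gamma l) t v ->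
                    Val N (S n) v -> Val N (S n) t).
  { intros t v Rt r Vv; apply (Hinv t Rt), sat_Dia; eauto. }
  exists (relativize N s n l), s.
  apply (proj1 (sat_relativize N s n l guard)); auto.
  split; [apply rt_refl | exact Vs].
Qed.

Fixpoint dead_in (M : model) (b k : nat) (x : St M) : Prop :=
  match k with
  | 0 => forall y, ~ Rel M b x y
  | S k => exists y, Rel M b x y /\ dead_in M b k y
  end.

Definition live (M : model) (b : nat) (x : St M) : Prop := exists y, Rel M b x y.

Lemma sat_dead_in M b k x :
  sat M x (dia_iter b k (Box (Atom b) Bot)) <-> dead_in M b k x.
Proof.
  revert x; induction k as [|k IH]; intros x; [reflexivity|].
  simpl dia_iter; rewrite sat_Dia; split; intros [y [r Hy]]; exists y; split; auto; apply IH; auto.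
Qed.

Lemma sat_live M b x : sat M x (Dia (Atom b) Top) <-> live M b x.
Proof.
  rewrite sat_Dia; split; intros [y Hy]; exists y; [apply Hy | split; [exact Hy | simpl; auto]].
Qed.

Lemma sat_A_form M b m x :
  sat M x (A_form b m) <->
  dead_in M b m x /\ ~ dead_in M b (S m) x /\
  exists y, Rel M b x y /\ live M b y /\ forall z, Rel M b y z -> live M b z.
Proof.
  unfold A_form; rewrite !sat_And, sat_Neg, !sat_dead_in, sat_Dia.
  split; intros [Hd [Hnd [y [r Hy]]]]; repeat split; auto; exists y; split; auto.
  - rewrite sat_And, sat_live in Hy; destruct Hy as [Hl Hall].
    split; [exact Hl | intros z rz; apply sat_live, Hall, rz].
  - destruct Hy as [Hl Hall]; rewrite sat_And, sat_live.
    split; [exact Hl | intros z rz; apply sat_live, Hall, rz].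
Qed.

(* A [Chain k] reaches a dead end in exactly j b-steps for every 1 <= j <= k (and
   [Chain 0] is itself dead); [Tag i] behaves like [Chain i] but also steps into the
   immortal [Loop], which is what the last conjunct of A_i detects.  An original
   state steps to every [Chain k], hence has dead ends at every depth and never
   satisfies any A_m, and it steps to [Tag i] exactly when it should satisfy B_i. *)
Inductive gadget : Type := Chain (k : nat) | Loop | Tag (i : nat).

Definition gadget_step (g h : gadget) : Prop :=
  match g, h with
  | Chain k, Chain k' | Tag k, Chain k' => k' < k
  | Loop, Loop | Tag _, Loop => True
  | _, _ => False
  end.

Definition tagged (M : model) (n : nat) (a : St M) (i : nat) : Prop :=
  (1 <= i <= n /\ Val M i a) \/ i = S n.

Definition gadget_rel (M : model) (n b j : nat) (x y : St M + gadget) : Prop :=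
  match x, y with
  | inl a, inl c => Rel M j a c
  | inl _, inr (Chain _) => j = b
  | inl _, inr Loop => False
  | inl a, inr (Tag i) => j = b /\ tagged M n a i
  | inr _, inl _ => False
  | inr g, inr h => j = b /\ gadget_step g h
  end.

(* The valuation is irrelevant: every variable of the translated formula is
   substituted by sigma. *)
Definition gadget_model (M : model) (n b : nat) : model :=
  Model (St M + gadget) (gadget_rel M n b) (fun _ _ => False).

Section Gadget.

Variables (M : model) (n b : nat).

Local Notation G := (gadget_model M n b).

Lemma dead_in_Chain k j : dead_in G b k (inr (Chain j)) <-> k <= j /\ (k = 0 -> j = 0).
Proof.
  revert j; induction k as [|k IH]; intros j; simpl.
  - split; [|intros [_ ->] [a|[k'| |i]]; simpl; lia].
    intros Hd; split; [lia|intros _].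
    destruct j; [reflexivity | destruct (Hd (inr (Chain 0))); simpl; split; [reflexivity | lia]].
  - split.
    + intros [[a|[k'| |i]] [r Hk]]; simpl in r; try tauto.
      apply IH in Hk; lia.
    + intros [Hkj _]; exists (inr (Chain k)); split; [simpl; split; [reflexivity | lia] |].
      apply IH; lia.
Qed.

Lemma not_dead_in_Loop k : ~ dead_in G b k (inr Loop).
Proof.
  induction k as [|k IH]; simpl.
  - intros Hd; apply (Hd (inr Loop)); simpl; auto.
  - intros [[a|[k'| |i]] [r Hk]]; simpl in r; tauto.
Qed.

Lemma dead_in_Tag k i : dead_in G b k (inr (Tag i)) <-> 1 <= k <= i.
Proof.
  destruct k as [|k]; simpl.
  - split; [|lia]; intros Hd; destruct (Hd (inr Loop)); simpl; auto.
  - split.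
    + intros [[a|[k'| |i']] [r Hk]]; simpl in r; try tauto.
      * apply dead_in_Chain in Hk; lia.
      * destruct (not_dead_in_Loop _ Hk).
    + intros Hki; exists (inr (Chain k)); split; [simpl; split; [reflexivity | lia] |].
      apply dead_in_Chain; lia.
Qed.

Lemma not_sat_A_inl a m : ~ sat G (inl a) (A_form b m).
Proof.
  rewrite sat_A_form; intros [_ [Hnd _]]; apply Hnd.
  exists (inr (Chain m)); split; [reflexivity | apply dead_in_Chain; lia].
Qed.

Lemma not_sat_A_Chain k m : ~ sat G (inr (Chain k)) (A_form b m).
Proof.
  rewrite sat_A_form; intros [_ [_ [y [r [[z rz] Hall]]]]].
  destruct y as [a|[k'| |i]]; simpl in r; try tauto.
  destruct z as [a|[k''| |i]]; simpl in rz; try tauto.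
  destruct (Hall (inr (Chain 0))) as [w rw]; [simpl; split; [reflexivity | lia] |].
  destruct w as [a|[k'''| |i]]; simpl in rw; lia.
Qed.

Lemma not_sat_A_Loop m : ~ sat G (inr Loop) (A_form b m).
Proof. rewrite sat_A_form; intros [Hd _]; exact (not_dead_in_Loop _ Hd). Qed.

Lemma sat_A_Tag i m : sat G (inr (Tag i)) (A_form b m) <-> 1 <= m /\ m = i.
Proof.
  rewrite sat_A_form, !dead_in_Tag; split.
  - intros [Hd [Hnd _]]; lia.
  - intros [Hm ->]; split; [lia | split; [lia |]].
    exists (inr Loop); split; [simpl; auto |].
    split; [exists (inr Loop); simpl; auto |].
    intros [a|[k| |j]] r; simpl in r; try tauto; exists (inr Loop); simpl; auto.
Qed.

Lemma sat_B_inl a m : sat G (inl a) (B_form b m) <-> tagged M n a m.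
Proof.
  unfold B_form; rewrite sat_Dia; split.
  - intros [[c|[k| |i]] [r HA]].
    + destruct (not_sat_A_inl _ _ HA).
    + destruct (not_sat_A_Chain _ _ HA).
    + destruct (not_sat_A_Loop _ HA).
    + apply sat_A_Tag in HA as [_ ->]; apply r.
  - intros Ht; exists (inr (Tag m)); split; [split; [reflexivity | exact Ht] |].
    apply sat_A_Tag; unfold tagged in Ht; lia.
Qed.

Lemma not_sat_B_inr g m : ~ sat G (inr g) (B_form b m).
Proof.
  unfold B_form; rewrite sat_Dia; intros [[c|[k| |i]] [r HA]]; destruct g; simpl in r; try tauto.
  all: first [exact (not_sat_A_Chain _ _ HA) | exact (not_sat_A_Loop _ HA)].
Qed.

End Gadget.

Lemma sigma_in n b i : 1 <= i <= S n -> sigma n b i = B_form b i.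
Proof.
  intros Hi; unfold sigma.
  rewrite (proj2 (Nat.leb_le 1 i)), (proj2 (Nat.leb_le i (S n))) by lia; reflexivity.
Qed.

Section Embedding.

Variables (M : model) (n b : nat).

Local Notation K := (subst_model (gadget_model M n b) (sigma n b)).

Lemma Val_guard x : Val K (S n) x <-> exists a, x = inl a.
Proof.
  simpl; rewrite sigma_in by lia; destruct x as [a|g].
  - rewrite sat_B_inl; unfold tagged; split; eauto.
  - split; [intros HB; destruct (not_sat_B_inr _ _ _ _ _ HB) | intros [a e]; discriminate].
Qed.

Lemma Val_inl i a : 1 <= i <= n -> (Val K i (inl a) <-> Val M i a).
Proof.
  intros Hi; simpl; rewrite sigma_in, sat_B_inl by lia; unfold tagged.
  split; [intros [[_ v] | e]; [exact v | lia] | auto].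
Qed.

Lemma rel_from_gadget p g u : rel K p (inr g) u -> exists h, u = inr h.
Proof.
  revert g u; induction p as [j|f|p1 IH1 p2 IH2|p1 IH1 p2 IH2|p1 IH1 p2 IH2|p1 IH1];
    intros g u r; simpl in r.
  - destruct u as [c|h]; [destruct r | eauto].
  - destruct r as [<- _]; eauto.
  - destruct r as [v [r1 r2]]; destruct (IH1 _ _ r1) as [h ->]; eauto.
  - destruct r as [r|r]; eauto.
  - destruct r as [r _]; eauto.
  - remember (inr g) as x eqn:Ex; revert g Ex.
    induction r as [x u r | x | x y u C1 IHC1 C2 IHC2]; intros g Ex; subst x; eauto.
    destruct (IHC1 _ eq_refl) as [h ->]; eauto.
Qed.

Lemma sat_tr_embed :
  (forall f, Forall (fun i => 1 <= i <= n) (vars_f f) ->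
     forall a, sat K (inl a) (tr_f n f) <-> sat M a f) /\
  (forall p, Forall (fun i => 1 <= i <= n) (vars_p p) ->
     forall a c, rel K (tr_p n p) (inl a) (inl c) <-> rel M p a c).
Proof.
  apply form_prog_ind; simpl.
  - intros i Vi a; apply Val_inl, (Forall_inv Vi).
  - intros; reflexivity.
  - intros f1 IH1 f2 IH2 [V1 V2]%Forall_app a.
    rewrite IH1, IH2 by assumption; reflexivity.
  - intros p IHp g IHg [Vp Vg]%Forall_app a; split.
    + intros Hbox c r; apply IHg, Hbox; [exact Vg | apply IHp | apply Val_guard]; eauto.
    + intros Hbox t r Vt; apply Val_guard in Vt as [c ->].
      apply IHg, Hbox, IHp; auto.
  - intros; reflexivity.
  - intros f IHf Vf a c; rewrite IHf by assumption.
    split; [intros [e Hf]; injection e as -> | intros [-> Hf]]; auto.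
  - intros p1 IH1 p2 IH2 [V1 V2]%Forall_app a c; split.
    + intros [[d|g] [r1 r2]].
      * exists d; split; [apply IH1 | apply IH2]; auto.
      * destruct (rel_from_gadget _ _ _ r2) as [h e]; discriminate.
    + intros [d [r1 r2]]; exists (inl d); split; [apply IH1 | apply IH2]; auto.
  - intros p1 IH1 p2 IH2 [V1 V2]%Forall_app a c.
    rewrite IH1, IH2 by assumption; reflexivity.
  - intros p1 IH1 p2 IH2 [V1 V2]%Forall_app a c.
    rewrite IH1, IH2 by assumption; reflexivity.
  - intros p IH Vp a c; split.
    + intros C; remember (inl a) as x eqn:Ex; remember (inl c) as y eqn:Ey.
      revert a c Ex Ey.
      induction C as [x y r | x | x y u C1 IHC1 C2 IHC2]; intros a c Ex Ey; subst.
      * apply rt_step, IH; auto.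
      * injection Ey as ->; apply rt_refl.
      * destruct y as [d|g].
        -- eapply rt_trans; [apply IHC1 | apply IHC2]; reflexivity.
        -- destruct (rel_from_gadget (Star (tr_p n p)) _ _ C2) as [h e]; discriminate.
    + intros C; induction C as [a c r | a | a d c C1 IHC1 C2 IHC2].
      * apply rt_step, IH; auto.
      * apply rt_refl.
      * eapply rt_trans; eauto.
Qed.

End Embedding.

Lemma satisfiable_subst_hat n l b f :
  Forall (fun i => 1 <= i <= n) (vars_f f) -> satisfiable f ->
  satisfiable (subst_f (sigma n b) (hat n l f)).
Proof.
  intros Hv [M [a Ha]]; exists (gadget_model M n b), (inl a).
  apply sat_subst; unfold hat, Theta; rewrite !sat_And; split; [split|].
  - apply Val_guard; eauto.
  - intros t _ Hdia; rewrite sat_Dia in Hdia; destruct Hdia as [v [r Vv]].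
    apply Val_guard in Vv as [c ->].
    destruct t as [d|g]; [apply Val_guard; eauto |].
    destruct (rel_from_gadget _ _ _ _ _ _ r) as [h e]; discriminate.
  - apply sat_tr_embed; auto.
Qed.

Theorem lemma3 (n l : nat) (phi : form) :
  1 <= l ->
  (forall i, In i (vars_f phi) -> 1 <= i <= n) ->
  (forall j, In j (atoms_f phi) -> 1 <= j <= l) ->
  (satisfiable phi <-> satisfiable (star_form n l phi)).
Proof.
  intros _ Hvars Hatoms.
  apply Forall_forall in Hvars, Hatoms.
  split.
  - apply satisfiable_subst_hat, Hvars.
  - intros [N [s Hs]]; apply sat_subst in Hs.
    exact (satisfiable_of_sat_hat _ _ _ _ _ Hatoms Hs).
Qed.
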